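(* Let $n\ge 3$ be an odd integer and $k$ a positive integer with $2k\mid n+1$, and put $t=\frac{n(n+1)}{2k}$. For $1\le i\le \frac{n+1}{2k}$ and $1\le j\le k$ define $$t_{2i-1,j}=n-\bigl(2k(i-1)+(j-1)\bigr),\qquad t_{2i,j}=n-2ki+j,$$ and for $1\le j\le k$ let $T_j=\{t_{i,j}: 1\le i\le \tfrac{n+1}{k}\}$ (the $j$-th column of the $\frac{n+1}{k}\times k$ matrix $(t_{ij})$). Then $T_1,\ldots,T_k$ are pairwise disjoint, $\bigcup_{j=1}^k T_j=\{0,1,\ldots,n\}$, and $\sum_{x\in T_j}x=t$ for every $1\le j\le k$. In particular the sets $T_j\setminus\{0\}$ form a partition of $\{1,\ldots,n\}$ into $k$ sets each with sum $t$. *)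

From HB Require Import structures.
From mathcomp Require Import all_boot all_order all_algebra.
From mathcomp Require Import finmap.
Set Implicit Arguments. Unset Strict Implicit. Unset Printing Implicit Defensive.
Import Order.TTheory GRing.Theory Num.Theory.

Local Open Scope ring_scope.

Definition t_odd (n k i j : nat) : int :=
  n%:Z - ((2 * k * (i - 1))%:Z + (j%:Z - 1)).

Definition t_even (n k i j : nat) : int :=
  n%:Z - (2 * k * i)%:Z + j%:Z.

(* Entry t_{r,j} of the ((n+1)/k) x k matrix, for row index r >= 1:
   odd rows r = 2i-1 and even rows r = 2i. *)
Definition tmat (n k r j : nat) : int :=
  if odd r then t_odd n k (r.+1 %/ 2)%N j else t_even n k (r %/ 2)%N j.

Definition Tcol (n k j : nat) : {fset int} :=
  [fset tmat n k r j | r in iota 1 ((n.+1) %/ k)%N]%fset.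

From HB Require Import structures.
From mathcomp Require Import all_boot all_order all_algebra.
From mathcomp Require Import finmap zify.
Set Implicit Arguments. Unset Strict Implicit. Unset Printing Implicit Defensive.
Import Order.TTheory GRing.Theory Num.Theory.

(* Write t_{r,j} = n - y(r,j).  Rows 2i+1 and 2i+2 use exactly the offsets y in
   the block [2ki, 2ki + 2k): row 2i+1 takes 2ki + (j - 1) and row 2i+2 its mirror
   image 2ki + (2k - j).  So (r, j) |-> y(r, j) is a bijection from the index set
   onto [0, n], inverted by division with remainder by 2k; this gives
   disjointness and covering.  Within a column the two entries of a block sum to
   2n + 1 - 2k(2i + 1), independently of j, so with n + 1 = 2km every column sums
   to m(2n + 1) - 2km^2 = nm = t. *)

Definition tmat_offset (k r j : nat) : nat :=
  2 * k * (r.-1 %/ 2) + (if odd r then j.-1 else 2 * k - j).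

Lemma tmat_offset_odd k i j : tmat_offset k (2 * i).+1 j = 2 * k * i + j.-1.
Proof.
rewrite /tmat_offset; have -> : odd (2 * i).+1 by lia.
by have -> : (2 * i).+1.-1 %/ 2 = i by lia.
Qed.

Lemma tmat_offset_even k i j : tmat_offset k (2 * i).+2 j = 2 * k * i + (2 * k - j).
Proof.
rewrite /tmat_offset; have -> : odd (2 * i).+2 = false by lia.
by have -> : (2 * i).+2.-1 %/ 2 = i by lia.
Qed.

Lemma tmat_offset_pair k i j : 1 <= j <= k ->
  tmat_offset k (2 * i).+1 j + tmat_offset k (2 * i).+2 j = 2 * k * (2 * i).+1 - 1.
Proof. by rewrite tmat_offset_odd tmat_offset_even; lia. Qed.

Lemma pos_parity_cases r : 0 < r -> exists i, r = (2 * i).+1 \/ r = (2 * i).+2.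
Proof. by move=> r_gt0; exists (r.-1 %/ 2); lia. Qed.

Definition offset_row (k y : nat) : nat :=
  if y %% (2 * k) < k then (2 * (y %/ (2 * k))).+1 else (2 * (y %/ (2 * k))).+2.

Definition offset_col (k y : nat) : nat :=
  if y %% (2 * k) < k then (y %% (2 * k)).+1 else (2 * k - y %% (2 * k)).

Section Offsets.
Variable k : nat.
Hypothesis k_gt0 : 0 < k.

Lemma tmat_offsetK r j : 0 < r -> 1 <= j <= k ->
  offset_row k (tmat_offset k r j) = r /\ offset_col k (tmat_offset k r j) = j.
Proof.
move=> /pos_parity_cases[i [->|->]] /andP[j_gt0 j_le_k];
  rewrite ?tmat_offset_odd ?tmat_offset_even /offset_row /offset_col
          (mulnC (2 * k)) modnMDl divnMDl ?muln_gt0 // modn_small ?divn_small; try lia.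
- have row_odd : j.-1 < k by lia.
  by rewrite row_odd; split; lia.
- have row_even : (2 * k - j < k) = false by lia.
  by rewrite row_even; split; lia.
Qed.

Lemma tmat_offset_inj r1 j1 r2 j2 : 0 < r1 -> 0 < r2 -> 1 <= j1 <= k -> 1 <= j2 <= k ->
  tmat_offset k r1 j1 = tmat_offset k r2 j2 -> r1 = r2 /\ j1 = j2.
Proof.
move=> r1_gt0 r2_gt0 j1_range j2_range eq_off.
have [row1 col1] := tmat_offsetK r1_gt0 j1_range.
have [row2 col2] := tmat_offsetK r2_gt0 j2_range.
by split; [rewrite -row1 -row2 | rewrite -col1 -col2]; rewrite eq_off.
Qed.

Lemma tmat_offset_lt m r j : 0 < r <= 2 * m -> 1 <= j <= k ->
  tmat_offset k r j < 2 * k * m.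
Proof.
move=> /andP[/pos_parity_cases[i r_eq] r_le] /andP[j_gt0 j_le_k].
have : k * i.+1 <= k * m by rewrite leq_mul2l; apply/orP; right; lia.
by case: r_eq => r_eq; rewrite r_eq ?tmat_offset_odd ?tmat_offset_even; lia.
Qed.

Lemma tmat_offset_onto m y : y < 2 * k * m ->
  [/\ 1 <= offset_row k y <= 2 * m, 1 <= offset_col k y <= k
    & tmat_offset k (offset_row k y) (offset_col k y) = y].
Proof.
move=> y_lt; have k2_gt0 : 0 < 2 * k by lia.
have y_eq := divn_eq y (2 * k); have s_lt := ltn_pmod y k2_gt0.
set q := y %/ (2 * k) in y_eq *; set s := y %% (2 * k) in y_eq s_lt *.
have q_lt : q < m by rewrite -(ltn_pmul2r k2_gt0); lia.
rewrite /offset_row /offset_col -/q -/s.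
by case: ifP => s_lt_k; rewrite ?tmat_offset_odd ?tmat_offset_even; split; lia.
Qed.

End Offsets.

Local Open Scope ring_scope.

Lemma tmatE n k r j : (0 < r)%N -> (1 <= j <= k)%N ->
  tmat n k r j = n%:Z - (tmat_offset k r j)%:Z.
Proof.
move=> r_gt0 /andP[j_gt0 j_le_k]; rewrite /tmat /tmat_offset /t_odd /t_even.
case: ifP => odd_r.
- have -> : (r.+1 %/ 2 = (r.-1 %/ 2).+1)%N by lia.
  by move: (r.-1 %/ 2)%N => q; lia.
- have -> : (r %/ 2 = (r.-1 %/ 2).+1)%N by lia.
  by move: (r.-1 %/ 2)%N => q; lia.
Qed.

Lemma tmat_inj n k r1 j1 r2 j2 : (0 < k)%N -> (0 < r1)%N -> (0 < r2)%N ->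
  (1 <= j1 <= k)%N -> (1 <= j2 <= k)%N ->
  tmat n k r1 j1 = tmat n k r2 j2 -> r1 = r2 /\ j1 = j2.
Proof.
move=> k_gt0 r1_gt0 r2_gt0 j1_range j2_range; rewrite !tmatE // => eq_tmat.
by apply: (tmat_offset_inj k_gt0) => //; lia.
Qed.

Lemma sum_tmat_col n k j m : (1 <= j <= k)%N ->
  \sum_(r <- iota 1 (2 * m)) tmat n k r j = (m * (2 * n + 1))%N%:Z - (2 * k * m * m)%N%:Z.
Proof.
move=> j_range; elim: m => [|m IH]; first by rewrite !muln0 big_nil mul0n.
rewrite mulnSr iotaD big_cat IH add1n /= !big_cons big_nil !tmatE // addr0.
have := tmat_offset_pair m j_range; lia.
Qed.

Lemma sum_fsetD1_0 (V : nmodType) (A : {fset V}) :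
  \sum_(x <- (A `\ 0)%fset) x = \sum_(x <- A) x.
Proof.
have [A0|A0] := boolP (0 \in A); last by rewrite mem_fsetD1.
by rewrite [in RHS](big_fsetD1 0 A0) /= add0r.
Qed.

Section Columns.
Variables n k m : nat.
Hypothesis k_gt0 : (0 < k)%N.
Hypothesis n1E : n.+1 = (2 * k * m)%N.

Lemma TcolE j : Tcol n k j = [fset tmat n k r j | r in iota 1 (2 * m)]%fset.
Proof. by rewrite /Tcol n1E mulnAC mulnK. Qed.

Lemma mem_TcolP x j :
  reflect (exists2 r, (0 < r <= 2 * m)%N & x = tmat n k r j) (x \in Tcol n k j).
Proof.
rewrite TcolE; apply: (iffP idP) => [/imfsetP[r r_in ->]|[r r_range ->]].
- by exists r => //; move: r_in; rewrite /= mem_iota; lia.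
- by apply/imfsetP; exists r => //=; rewrite mem_iota; lia.
Qed.

Lemma Tcol_disjoint j1 j2 : (1 <= j1 <= k)%N -> (1 <= j2 <= k)%N -> j1 != j2 ->
  (Tcol n k j1 `&` Tcol n k j2)%fset = fset0.
Proof.
move=> j1_range j2_range /eqP j1_neq; apply/fsetP => x; rewrite !inE.
apply/negP => /andP[/mem_TcolP[r1 /andP[r1_gt0 _] ->] /mem_TcolP[r2 /andP[r2_gt0 _]]].
by move=> /tmat_inj[] // _ /j1_neq.
Qed.

Lemma Tcol_cover x :
  (exists2 j, (1 <= j <= k)%N & x \in Tcol n k j) <-> 0 <= x <= n%:Z.
Proof.
split=> [[j j_range /mem_TcolP[r r_range ->]]|x_range].
  rewrite tmatE //; last by case/andP: r_range.
  have := tmat_offset_lt k_gt0 r_range j_range; lia.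
have [y x_eq] : exists y, x = n%:Z - y%:Z by exists (n - `|x|)%N; lia.
have y_lt : (y < 2 * k * m)%N by lia.
have [row_range col_range offset_eq] := tmat_offset_onto k_gt0 y_lt.
exists (offset_col k y) => //; apply/mem_TcolP; exists (offset_row k y) => //.
by rewrite tmatE ?offset_eq //; case/andP: row_range.
Qed.

Lemma sum_Tcol j : (1 <= j <= k)%N -> \sum_(x <- Tcol n k j) x = (n * m)%N%:Z.
Proof.
move=> j_range; rewrite TcolE big_imfset /=.
  rewrite undup_id ?iota_uniq // sum_tmat_col //.
  have : (m * n.+1 = 2 * k * m * m)%N by rewrite n1E mulnC.
  lia.
move=> r1 r2; rewrite /= !mem_iota => r1_range r2_range.
by move=> /tmat_inj[] //; lia.
Qed.

End Columns.

Theorem mainTheorem3 (n k : nat) :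
  (3 <= n)%N -> odd n -> (0 < k)%N -> (2 * k %| n.+1)%N ->
  let t : int := ((n * n.+1) %/ (2 * k))%N%:Z in
  [/\ (forall j1 j2 : nat, (1 <= j1 <= k)%N -> (1 <= j2 <= k)%N -> j1 != j2 ->
         (Tcol n k j1 `&` Tcol n k j2)%fset = fset0),
      (forall x : int,
         (exists2 j : nat, (1 <= j <= k)%N & x \in Tcol n k j) <->
         (0 <= x <= n%:Z))
    , (forall j : nat, (1 <= j <= k)%N -> \sum_(x <- Tcol n k j) x = t)
    & (* in particular: the T_j \ {0} partition {1,...,n}, each with sum t *)
      [/\ (forall j1 j2 : nat, (1 <= j1 <= k)%N -> (1 <= j2 <= k)%N -> j1 != j2 ->
             ((Tcol n k j1 `\ 0) `&` (Tcol n k j2 `\ 0))%fset = fset0),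
          (forall x : int,
             (exists2 j : nat, (1 <= j <= k)%N & x \in (Tcol n k j `\ 0)%fset) <->
             (1 <= x <= n%:Z))
        & (forall j : nat, (1 <= j <= k)%N -> \sum_(x <- (Tcol n k j `\ 0)%fset) x = t)]].
Proof.
move=> _ _ k_gt0 /dvdnP[m n1E] t; rewrite mulnC in n1E.
have t_eq : t = (n * m)%N%:Z by rewrite /t n1E mulnCA mulKn // muln_gt0.
have disjoint := Tcol_disjoint k_gt0 n1E.
have cover := Tcol_cover k_gt0 n1E.
have sum j (j_range : (1 <= j <= k)%N) : \sum_(x <- Tcol n k j) x = t.
  by rewrite t_eq (sum_Tcol k_gt0 n1E).
split=> //; split=> [j1 j2 j1_range j2_range j1_neq | x | j j_range].
- by rewrite -fsetDIl disjoint // fset0D.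
- split=> [[j j_range /fsetD1P[x_neq0 x_in]] | x_range].
    suff : 0 <= x <= n%:Z by lia.
    by apply/cover; exists j.
  have [|j j_range x_in] := (cover x).2; first lia.
  by exists j => //; apply/fsetD1P; split=> //; lia.
- by rewrite sum_fsetD1_0 sum.
Qed.
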